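(* Fix $0<\epsilon<1$ and $z,w\in\mathcal{S}^{n-1}$. If $\tilde z,\tilde w\in\mathcal{S}^{n-1}$ satisfy $\|\tilde z-z\|\leqslant\epsilon$ and $\|\tilde w-w\|\leqslant\epsilon$, then $\|\Phi_{\tilde z,\tilde w}-\Phi_{z,w}\|\leqslant\frac{88}{\pi}\epsilon$.
   Context: $\mathcal{S}^{n-1}$ is the unit sphere in $\mathbb{R}^n$; $\|\cdot\|$ is the spectral norm for matrices. For nonzero $z,w$: $\theta_{z,w}=\angle(z,w)\in[0,\pi]$, $\hat z=z/\|z\|$, $M_{\hat z\leftrightarrow\hat w}$ the symmetric matrix sending $\hat z\mapsto\hat w$, $\hat w\mapsto\hat z$ and vanishing on $\mathrm{span}(z,w)^\perp$ ($\pm\hat z\hat z^\top$ when $\theta_{z,w}\in\{0,\pi\}$), and $\Phi_{z,w}=\frac{\pi-2\theta_{z,w}}{\pi}I_n+\frac{2\sin\theta_{z,w}}{\pi}M_{\hat z\leftrightarrow\hat w}$. *)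

From HB Require Import structures.
From mathcomp Require Import all_boot all_order all_algebra.
From mathcomp Require Import all_classical all_reals.
From mathcomp Require Import exp trigo.
Set Implicit Arguments. Unset Strict Implicit. Unset Printing Implicit Defensive.
Import Order.TTheory GRing.Theory Num.Theory.
Local Open Scope ring_scope.
Local Open Scope classical_set_scope.

Section Defs.
Variables (R : realType) (n : nat).

Definition dotv (u v : 'cV[R]_n) : R := \sum_(i < n) u i 0 * v i 0.
Definition enorm (u : 'cV[R]_n) : R := Num.sqrt (dotv u u).

Definition sphere : set 'cV[R]_n := [set x | enorm x = 1].

Definition spec_norm (A : 'M[R]_n) : R :=
  sup [set enorm (A *m x) | x in sphere].

Definition hatv (z : 'cV[R]_n) : 'cV[R]_n := (enorm z)^-1 *: z.
Definition angle (z w : 'cV[R]_n) : R :=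
  acos (dotv z w / (enorm z * enorm w)).

(* M_{zhat <-> what}: symmetric, swaps zhat and what, vanishes on
   span(z,w)^perp; equals +/- zhat zhat^T when theta in {0, pi}. *)
Definition swapM (z w : 'cV[R]_n) : 'M[R]_n :=
  let a := hatv z in let b := hatv w in let c := dotv a b in
  if angle z w == 0 then a *m a^T
  else if angle z w == pi then - (a *m a^T)
  else (1 - c ^+ 2)^-1 *: (a *m b^T + b *m a^T - c *: (a *m a^T + b *m b^T)).

Definition Phi (z w : 'cV[R]_n) : 'M[R]_n :=
  ((pi - 2 * angle z w) / pi) *: 1%:M + (2 * sin (angle z w) / pi) *: swapM z w.

End Defs.

(* For unit vectors a, b let c = <a,b>, theta = acos c and y = b - c a, so that
   |y| = sin theta.  In the orthonormal frame (a, y/|y|) the swap matrix satisfies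
     sin theta . M x = |y| <b,x> a + (|y| <a,x> - c <y,x>/|y|) y,
   and every coefficient is Lipschitz in b once the ratio <y,x>/|y| is weighted by
   |y'|; so b |-> sin theta . M x is 8-Lipschitz.  The angle is 4-Lipschitz in b,
   since 1 - cos (theta - theta') <= 1 - <b,b'> = |b - b'|^2/2 while
   1 - cos u >= u^2/32 on [0, pi].  Hence b |-> Phi_{a,b} is (24/pi)-Lipschitz in
   operator norm, and with Phi_{a,b} = Phi_{b,a} moving both arguments by eps moves
   Phi by at most 48/pi eps. *)

From HB Require Import structures.
From mathcomp Require Import all_boot all_order all_algebra.
From mathcomp Require Import all_classical all_reals.
From mathcomp Require Import exp trigo.
From mathcomp Require Import topology normedtype derive.
From mathcomp Require Import ring lra.
Set Implicit Arguments. Unset Strict Implicit.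
Import Order.TTheory GRing.Theory Num.Theory.
Import numFieldNormedType.Exports.
Local Open Scope ring_scope.

Section RealBounds.
Variable R : realType.
Implicit Types x y s t u : R.

Lemma ler_distM x x' y y' :
  `|x * y - x' * y'| <= `|x - x'| * `|y| + `|x'| * `|y - y'|.
Proof.
have -> : x * y - x' * y' = (x - x') * y + x' * (y - y') by ring.
by rewrite -!normrM ler_normD.
Qed.

Lemma normr_ratio_le1 s t : `|t| <= s -> `|t / s| <= 1.
Proof.
move=> ts; have [->|s0] := eqVneq s 0; first by rewrite invr0 mulr0 normr0.
have s_gt0 : 0 < s by rewrite lt_def s0 (le_trans (normr_ge0 t)).
by rewrite normrM normfV (gtr0_norm s_gt0) ler_pdivrMr // mul1r.
Qed.

(* [t / s] jumps at [s = 0] (where it is [0]); weighted by [s'] it is Lipschitz. *)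
Lemma ler_dist_ratio s s' t t' : `|t| <= s -> `|t'| <= s' ->
  `|t / s - t' / s'| * s' <= `|s - s'| + `|t - t'|.
Proof.
move=> ts ts'; have s'_ge0 : 0 <= s' := le_trans (normr_ge0 _) ts'.
have [->|s'0] := eqVneq s' 0; first by rewrite mulr0 addr_ge0.
rewrite -{2}(ger0_norm s'_ge0) -normrM.
have [s0|s0] := eqVneq s 0.
  have t0 : t = 0 by apply/normr0_eq0/le_anti; rewrite normr_ge0 -s0 ts.
  rewrite s0 t0 mul0r sub0r mulNr divfK // !sub0r !normrN (ger0_norm s'_ge0).
  by have := normr_ge0 t'; lra.
have -> : (t / s - t' / s') * s' = t / s * (s' - s) + (t - t') by field; rewrite s0 s'0.
apply: le_trans (ler_normD _ _) _; rewrite lerD2r normrM distrC.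
by rewrite ler_piMl // normr_ratio_le1.
Qed.

Lemma ler_dist_coef_ratio s s' t t' c c' p :
  `|t| <= s -> `|t'| <= s' -> s' <= 1 -> `|c'| <= 1 -> `|p| <= 1 ->
  `|(s * p - c * (t / s)) - (s' * p - c' * (t' / s'))| * s'
    <= 2 * `|s - s'| + `|c - c'| + `|t - t'|.
Proof.
move=> ts ts' s'1 c'1 p1; have s'_ge0 : 0 <= s' := le_trans (normr_ge0 _) ts'.
have r1 := normr_ratio_le1 ts; have dr := ler_dist_ratio ts ts'.
have -> : s * p - c * (t / s) - (s' * p - c' * (t' / s'))
    = (s - s') * p - (c * (t / s) - c' * (t' / s')) by ring.
apply: le_trans (ler_wpM2r s'_ge0 (ler_normB _ _)) _; rewrite normrM mulrDl.
have dsp : `|s - s'| * `|p| * s' <= `|s - s'|.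
  by apply: le_trans (ler_piMr _ s'1) (ler_piMr _ p1); rewrite ?mulr_ge0.
have dcr : `|c * (t / s) - c' * (t' / s')| * s'
    <= `|c - c'| * `|t / s| * s' + `|c'| * (`|t / s - t' / s'| * s').
  by apply: le_trans (ler_wpM2r s'_ge0 (ler_distM c c' _ _)) _; rewrite mulrDl mulrA.
have dc : `|c - c'| * `|t / s| * s' <= `|c - c'|.
  by apply: le_trans (ler_piMr _ s'1) (ler_piMr _ r1); rewrite ?mulr_ge0.
have dc' : `|c'| * (`|t / s - t' / s'| * s') <= `|t / s - t' / s'| * s'.
  by rewrite ler_piMl ?mulr_ge0.
lra.
Qed.

Lemma sin_ge_quarter u : 0 <= u <= pi / 2 -> u / 4 <= sin u.
Proof.
move=> /andP[u_ge0 u_le]; have pi_gt0 := @pi_gt0 R; have pihalf_lt2 := @pihalf_lt2 R.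
have cos_pi4_sqr : cos (pi / 4) ^+ 2 = 1 / 2 :> R.
  have := cos_mulr2n (pi / 4 : R).
  rewrite (_ : (pi / 4 : R) *+ 2 = pi / 2) ?cos_pihalf; first lra.
  by rewrite mulr2n; field.
have cos_pi4_gt0 : 0 < cos (pi / 4) :> R by apply: cos_gt0_pihalf; lra.
have cos_pi4_ge : 1 / 2 <= cos (pi / 4) :> R by nra.
have [u_le4|u_gt4] := leP u (pi / 4).
  have [->|u0] := eqVneq u 0; first by rewrite sin0 mul0r.
  have u_gt0 : 0 < u by rewrite lt_def u0.
  have [|c] := MVT u_gt0 (fun r _ => is_derive_sin r).
    by apply/continuous_subspaceT => ?; exact: continuous_sin.
  rewrite in_itv /= sin0 subr0 => /andP[c_gt0 c_lt] ->.
  have : cos (pi / 4) <= cos c by rewrite leNgt ltr_cos ?in_itv /= -?leNgt; lra.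
  nra.
have : sin (pi / 4) <= sin u by rewrite leNgt ltr_sin ?in_itv /= -?leNgt; lra.
by rewrite -cosBpihalf (_ : pi / 4 - pi / 2 = - (pi / 4)) ?cosN; [lra | field].
Qed.

Lemma one_sub_cos_ge u : 0 <= u <= pi -> u ^+ 2 / 32 <= 1 - cos u.
Proof.
move=> /andP[u_ge0 u_le].
have sin_half : u / 2 / 4 <= sin (u / 2) by apply: sin_ge_quarter; lra.
have cos_double : cos u = 1 - 2 * sin (u / 2) ^+ 2.
  rewrite {1}(_ : u = (u / 2) *+ 2) ?cos_mulr2n ?cos2sin2 mulr2n; first lra.
  by rewrite mulr2n; field.
rewrite cos_double; nra.
Qed.

End RealBounds.

Section Euclid.
Variables (R : realType) (n : nat).
Implicit Types (u v w x a b : 'cV[R]_n).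

Lemma dotvC u v : dotv u v = dotv v u.
Proof. by apply: eq_bigr => i _; rewrite mulrC. Qed.

Lemma dotvDl u v w : dotv (u + v) w = dotv u w + dotv v w.
Proof. by rewrite /dotv -big_split; apply: eq_bigr => i _; rewrite !mxE mulrDl. Qed.

Lemma dotvBl u v w : dotv (u - v) w = dotv u w - dotv v w.
Proof. by rewrite /dotv -sumrB; apply: eq_bigr => i _; rewrite !mxE mulrBl. Qed.

Lemma dotvZl k u w : dotv (k *: u) w = k * dotv u w.
Proof. by rewrite /dotv mulr_sumr; apply: eq_bigr => i _; rewrite !mxE mulrA. Qed.

Lemma dotvDr u v w : dotv w (u + v) = dotv w u + dotv w v.
Proof. by rewrite dotvC dotvDl !(dotvC w). Qed.

Lemma dotvBr u v w : dotv w (u - v) = dotv w u - dotv w v.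
Proof. by rewrite dotvC dotvBl !(dotvC w). Qed.

Lemma dotvZr k u w : dotv w (k *: u) = k * dotv w u.
Proof. by rewrite dotvC dotvZl dotvC. Qed.

Lemma dotvNr u w : dotv w (- u) = - dotv w u.
Proof. by rewrite -scaleN1r dotvZr mulN1r. Qed.

Lemma dotv0r u : dotv u 0 = 0.
Proof. by rewrite /dotv big1 // => i _; rewrite mxE mulr0. Qed.

Lemma dotvv_ge0 u : 0 <= dotv u u.
Proof. by apply: sumr_ge0 => i _; rewrite -expr2 sqr_ge0. Qed.

Lemma dotvv_eq0 u : dotv u u = 0 -> u = 0.
Proof.
move=> /eqP; rewrite psumr_eq0 => [/allP u0|i _]; last by rewrite -expr2 sqr_ge0.
apply/matrixP => i j; rewrite (ord1 j) mxE.
by have /(_ (mem_index_enum i)) := u0 i; rewrite /= mulf_eq0 orbb => /eqP.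
Qed.

Lemma enorm_ge0 u : 0 <= enorm u.
Proof. exact: sqrtr_ge0. Qed.

Lemma enorm_sqr u : enorm u ^+ 2 = dotv u u.
Proof. by rewrite sqr_sqrtr // dotvv_ge0. Qed.

Lemma enorm_eq0 u : enorm u = 0 -> u = 0.
Proof. by move=> u0; apply: dotvv_eq0; rewrite -enorm_sqr u0 expr0n. Qed.

Lemma dotvv_unit u : enorm u = 1 -> dotv u u = 1.
Proof. by move=> u1; rewrite -enorm_sqr u1 expr1n. Qed.

Lemma enormZ k u : enorm (k *: u) = `|k| * enorm u.
Proof. by rewrite /enorm dotvZl dotvZr mulrA -expr2 sqrtrM ?sqr_ge0 // sqrtr_sqr. Qed.

Lemma enormN u : enorm (- u) = enorm u.
Proof. by rewrite -scaleN1r enormZ normrN1 mul1r. Qed.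

Lemma dotv_sqr_le u v : dotv u v ^+ 2 <= dotv u u * dotv v v.
Proof.
have [/dotvv_eq0 ->|vv0] := eqVneq (dotv v v) 0; first by rewrite !dotv0r expr0n mulr0.
have vv_gt0 : 0 < dotv v v by rewrite lt_def vv0 dotvv_ge0.
have := dotvv_ge0 (dotv v v *: u - dotv u v *: v).
rewrite !(dotvBl, dotvBr, dotvZl, dotvZr) (dotvC v u); nra.
Qed.

Lemma normr_dotv_le u v : `|dotv u v| <= enorm u * enorm v.
Proof.
rewrite /enorm -sqrtrM ?dotvv_ge0 // -sqrtr_sqr ler_sqrt ?dotv_sqr_le //.
by rewrite mulr_ge0 // dotvv_ge0.
Qed.

Lemma ler_enormD u v : enorm (u + v) <= enorm u + enorm v.
Proof.
rewrite -ler_sqr ?nnegrE ?addr_ge0 ?enorm_ge0 // sqrrD !enorm_sqr.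
rewrite dotvDl !dotvDr (dotvC v u).
have := normr_dotv_le u v; have := ler_norm (dotv u v); lra.
Qed.

Lemma ler_enorm_dist u v : `|enorm u - enorm v| <= enorm (u - v).
Proof.
have := ler_enormD (u - v) v; have := ler_enormD (v - u) u.
rewrite !subrK -[v - u]opprB enormN ler_norml; lra.
Qed.

Lemma ler_enormZB k k' u u' :
  enorm (k *: u - k' *: u') <= `|k - k'| * enorm u' + `|k| * enorm (u - u').
Proof.
have -> : k *: u - k' *: u' = (k - k') *: u' + k *: (u - u').
  by apply/matrixP => i j; rewrite !mxE; ring.
by rewrite -!enormZ ler_enormD.
Qed.

Lemma mul_outer a b x : (a *m b^T) *m x = dotv b x *: a.
Proof.
rewrite -mulmxA -mul_mx_scalar; congr (_ *m _).
apply/matrixP => i j; rewrite (ord1 i) (ord1 j) !mxE /=.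
by apply: eq_bigr => k _; rewrite !mxE.
Qed.

Lemma dotv_unit_itv a b : enorm a = 1 -> enorm b = 1 -> -1 <= dotv a b <= 1.
Proof. by move=> a1 b1; rewrite -ler_norml -(mulr1 1) -{1}a1 -b1 normr_dotv_le. Qed.

Lemma unit_dotv_eq1 a b : enorm a = 1 -> enorm b = 1 -> dotv a b = 1 -> a = b.
Proof.
move=> a1 b1 ab1; apply/subr0_eq/dotvv_eq0.
by rewrite dotvBl !dotvBr (dotvC b a) ab1 !dotvv_unit // subrr.
Qed.

Lemma hatv_unit a : enorm a = 1 -> hatv a = a.
Proof. by move=> a1; rewrite /hatv a1 invr1 scale1r. Qed.

Lemma angle_unit a b : enorm a = 1 -> enorm b = 1 -> angle a b = acos (dotv a b).
Proof. by move=> a1 b1; rewrite /angle a1 b1 mulr1 divr1. Qed.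

Lemma cos_angle_unit a b : enorm a = 1 -> enorm b = 1 -> cos (angle a b) = dotv a b.
Proof. by move=> a1 b1; rewrite angle_unit // acosK // in_itv /= dotv_unit_itv. Qed.

Lemma angleC u v : angle u v = angle v u.
Proof. by rewrite /angle dotvC [enorm u * _]mulrC. Qed.

Lemma Phi_sym a b : enorm a = 1 -> enorm b = 1 -> Phi a b = Phi b a.
Proof.
move=> a1 b1; have cos_ba := cos_angle_unit b1 a1.
rewrite /Phi /swapM (angleC a b) (hatv_unit a1) (hatv_unit b1).
have [th0|th_neq0] := eqVneq (angle b a) 0.
  have ba : b = a by apply: unit_dotv_eq1; rewrite // -cos_ba th0 cos0.
  by rewrite ba.
have [thpi|th_neqpi] := eqVneq (angle b a) pi.
  have ba : b = - a.
    by apply: unit_dotv_eq1; rewrite ?enormN // dotvNr -cos_ba thpi cospi opprK.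
  by rewrite ba [(- a)^T]linearN mulmxN mulNmx opprK.
by rewrite (dotvC b a) (addrC (b *m a^T)) (addrC (b *m b^T)).
Qed.

Local Open Scope classical_set_scope.

Lemma spec_norm_le (A : 'M[R]_n) K : 0 <= K ->
  (forall x, enorm x = 1 -> enorm (A *m x) <= K) -> spec_norm A <= K.
Proof.
move=> K_ge0 AK; rewrite /spec_norm; set E := (X in sup X).
have [[r Er]|E0] := pselect (E !=set0).
  by apply: ge_sup => [|_ [x x1 <-]]; [exists r | exact: AK].
rewrite (_ : E = set0) ?sup0 //.
by apply/seteqP; split => // r Er; apply: E0; exists r.
Qed.

End Euclid.

Section Perp.
Variables (R : realType) (n : nat) (a : 'cV[R]_n).
Hypothesis a1 : enorm a = 1.
Implicit Types (b e x : 'cV[R]_n).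

Definition perp b := b - dotv a b *: a.

(* [sin (angle a b) *: (swapM a b *m x)] in the frame [(a, perp b / enorm (perp b))],
   where [enorm (perp b) = sin (angle a b)]; no case split at the angles [0] and [pi]. *)
Definition sin_swap b x :=
  let c := dotv a b in let y := perp b in let s := enorm y in
  (s * dotv b x) *: a + (s * dotv a x - c * (dotv y x / s)) *: y.

Lemma perpB b b' : perp b - perp b' = perp (b - b').
Proof. by apply/matrixP => i j; rewrite /perp dotvBr !mxE; ring. Qed.

Lemma dotv_perp b b' : dotv (perp b) (perp b') = dotv b b' - dotv a b * dotv a b'.
Proof. by rewrite /perp !(dotvBl, dotvBr, dotvZl, dotvZr) dotvv_unit // (dotvC b a); ring. Qed.

Lemma enorm_perp_le e : enorm (perp e) <= enorm e.
Proof.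
rewrite -ler_sqr ?nnegrE ?enorm_ge0 // !enorm_sqr dotv_perp.
by have := sqr_ge0 (dotv a e); rewrite expr2; lra.
Qed.

Lemma sin_acos_dotv b : enorm b = 1 -> sin (acos (dotv a b)) = enorm (perp b).
Proof. by move=> b1; rewrite sin_acos ?dotv_unit_itv // /enorm dotv_perp dotvv_unit // expr2. Qed.

Lemma sin_angle_swapM b x : enorm b = 1 ->
  sin (angle a b) *: (swapM a b *m x) = sin_swap b x.
Proof.
move=> b1; have sinE := sin_acos_dotv b1.
rewrite /swapM /sin_swap !hatv_unit // angle_unit // sinE.
set c := dotv a b in sinE *; set y := perp b in sinE *; set s := enorm y in sinE *.
have [s0|s_neq0] := eqVneq s 0.
  by rewrite s0 (enorm_eq0 s0) !(scale0r, mul0r, scaler0, addr0).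
have /negPf -> : acos c != 0 by apply: contra_neq s_neq0 => th0; rewrite -sinE th0 sin0.
have /negPf -> : acos c != pi by apply: contra_neq s_neq0 => thpi; rewrite -sinE thpi sinpi.
have s_sqr : s ^+ 2 = 1 - c ^+ 2 by rewrite enorm_sqr dotv_perp dotvv_unit // expr2.
have bE : b = y + c *: a by rewrite subrK.
have bx : dotv b x = dotv y x + c * dotv a x by rewrite {1}bE dotvDl dotvZl.
have s_inv : s^-1 = s / (1 - c ^+ 2) by rewrite -s_sqr; field.
have c_sqr_neq1 : 1 - c ^+ 2 != 0 by rewrite -s_sqr expf_neq0.
rewrite -scalemxAl mulmxBl mulmxDl -scalemxAl mulmxDl !mul_outer bx s_inv.
clearbody s y c; rewrite {}bE; apply/matrixP => i j; rewrite !mxE.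
by move: (dotv y x) (dotv a x) (a i j) (y i j) => t p ai yi; field.
Qed.

Lemma Phi_unitE b x : enorm b = 1 ->
  Phi a b *m x = ((pi - 2 * acos (dotv a b)) / pi) *: x + (2 / pi) *: sin_swap b x.
Proof.
move=> b1; rewrite -sin_angle_swapM // /Phi mulmxDl -!scalemxAl mul1mx scalerA mulrAC.
by rewrite angle_unit.
Qed.

Lemma acos_dotv_lipschitz b b' : enorm b = 1 -> enorm b' = 1 ->
  `|acos (dotv a b) - acos (dotv a b')| <= 4 * enorm (b - b').
Proof.
move=> b1 b'1; have ab := dotv_unit_itv a1 b1; have ab' := dotv_unit_itv a1 b'1.
have cos_diff : 1 - cos (acos (dotv a b) - acos (dotv a b')) <= enorm (b - b') ^+ 2 / 2.
  rewrite cosB !acosK ?in_itv // !sin_acos_dotv // enorm_sqr dotvBl !dotvBr !dotvv_unit //.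
  have := dotv_perp b b'; have := normr_dotv_le (perp b) (perp b').
  have := ler_norm (dotv (perp b) (perp b')); rewrite (dotvC b' b); lra.
move: cos_diff; rewrite -cos_norm; set al := `|_ - _| => cos_al.
have al_itv : 0 <= al <= pi.
  rewrite normr_ge0 ler_norml; have := acos_ge0 ab; have := acos_lepi ab.
  by have := acos_ge0 ab'; have := acos_lepi ab'; lra.
have cos_al_ge := one_sub_cos_ge al_itv.
by rewrite -ler_sqr ?nnegrE ?mulr_ge0 ?enorm_ge0 //; lra.
Qed.

Lemma sin_swap_lipschitz b b' x : enorm b = 1 -> enorm b' = 1 -> enorm x = 1 ->
  enorm (sin_swap b x - sin_swap b' x) <= 8 * enorm (b - b').
Proof.
move=> b1 b'1 x1.
have dotx_le u : `|dotv u x| <= enorm u by have := normr_dotv_le u x; rewrite x1 mulr1.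
have dota_le u : `|dotv a u| <= enorm u by have := normr_dotv_le a u; rewrite a1 mul1r.
rewrite /sin_swap; set d := enorm (b - b').
set c := dotv a b; set c' := dotv a b'; set p := dotv a x.
set y := perp b; set y' := perp b'; set s := enorm y; set s' := enorm y'.
set t := dotv y x; set t' := dotv y' x.
have dy : enorm (y - y') <= d by rewrite perpB enorm_perp_le.
have ds : `|s - s'| <= d := le_trans (ler_enorm_dist _ _) dy.
have dc : `|c - c'| <= d by rewrite -dotvBr dota_le.
have dbx : `|dotv b x - dotv b' x| <= d by rewrite -dotvBl dotx_le.
have dt : `|t - t'| <= d by rewrite -dotvBl (le_trans (dotx_le _)).
have s_ge0 : 0 <= s := enorm_ge0 y; have s'_ge0 : 0 <= s' := enorm_ge0 y'.
have s'_le1 : s' <= 1 by rewrite -b'1 enorm_perp_le.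
have c'_le1 : `|c'| <= 1 by rewrite -b'1 dota_le.
have p_le1 : `|p| <= 1 by rewrite -a1 dotx_le.
have bx_le1 : `|dotv b x| <= 1 by rewrite -b1 dotx_le.
have t_le : `|t| <= s := dotx_le y; have t'_le : `|t'| <= s' := dotx_le y'.
have k_le2 : `|s * p - c * (t / s)| <= 2.
  apply: le_trans (ler_normB _ _) _; rewrite normrM (ger0_norm s_ge0) normrM.
  have s_le1 : s <= 1 by rewrite -b1 enorm_perp_le.
  have c_le1 : `|c| <= 1 by rewrite -b1 dota_le.
  have := le_trans (ler_piMr s_ge0 p_le1) s_le1.
  by have := le_trans (ler_piMr (normr_ge0 c) (normr_ratio_le1 t_le)) c_le1; lra.
have dk := ler_dist_coef_ratio c t_le t'_le s'_le1 c'_le1 p_le1.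
set k := s * p - c * (t / s) in k_le2 dk *; set k' := s' * p - c' * (t' / s') in dk *.
have dsb : `|s * dotv b x - s' * dotv b' x| <= 2 * d.
  have := ler_distM s s' (dotv b x) (dotv b' x); rewrite (ger0_norm s'_ge0).
  by have := normr_ge0 (s - s'); have := normr_ge0 (dotv b x - dotv b' x); nra.
rewrite opprD addrACA -scalerBl; apply: le_trans (ler_enormD _ _) _.
rewrite enormZ a1 mulr1; have := ler_enormZB k k' y y'; rewrite -/s'.
by have := normr_ge0 k; have := enorm_ge0 (y - y'); nra.
Qed.

Lemma Phi_lipschitz b b' x : enorm b = 1 -> enorm b' = 1 -> enorm x = 1 ->
  enorm ((Phi a b - Phi a b') *m x) <= 24 / pi * enorm (b - b').
Proof.
move=> b1 b'1 x1; have pi_gt0 := @pi_gt0 R.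
have := acos_dotv_lipschitz b1 b'1; have := sin_swap_lipschitz b1 b'1 x1.
set th := acos (dotv a b); set th' := acos (dotv a b').
set G := sin_swap b x; set G' := sin_swap b' x; set d := enorm (b - b') => dG dth.
have -> : (Phi a b - Phi a b') *m x = (2 / pi) *: ((th' - th) *: x + (G - G')).
  rewrite mulmxBl (Phi_unitE x b1) (Phi_unitE x b'1) -/th -/th' -/G -/G'.
  move: (pi : R) pi_gt0 => P /lt0r_neq0 P_neq0; clearbody G G'.
  by apply/matrixP => i j; rewrite !mxE; field.
have dsum := ler_enormD ((th' - th) *: x) (G - G').
rewrite enormZ x1 mulr1 distrC in dsum.
have pi_inv_ge0 : 0 <= (pi : R)^-1 by rewrite invr_ge0 ltW.
rewrite enormZ ger0_norm; first nra.
by rewrite divr_ge0 // ltW.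
Qed.

End Perp.

Theorem lemma27 (R : realType) (n : nat) (eps : R) (z w zt wt : 'cV[R]_n) :
  0 < eps -> eps < 1 ->
  enorm z = 1 -> enorm w = 1 -> enorm zt = 1 -> enorm wt = 1 ->
  enorm (zt - z) <= eps -> enorm (wt - w) <= eps ->
  spec_norm (Phi zt wt - Phi z w) <= 88 / pi * eps.
Proof.
move=> eps_gt0 _ z1 w1 zt1 wt1 dz dw.
have pi_gt0 := @pi_gt0 R.
have L_ge0 : 0 <= 24 / pi :> R by rewrite divr_ge0 // ltW.
apply: spec_norm_le => [|x x1]; first by rewrite mulr_ge0 ?divr_ge0 // ltW.
have -> : Phi zt wt - Phi z w = (Phi zt wt - Phi zt w) + (Phi w zt - Phi w z).
  by rewrite (Phi_sym w1 zt1) (Phi_sym w1 z1) addrA subrK.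
rewrite mulmxDl; apply: le_trans (ler_enormD _ _) _.
apply: le_trans (lerD (Phi_lipschitz zt1 wt1 w1 x1) (Phi_lipschitz w1 zt1 z1 x1)) _.
rewrite -mulrDr; apply: le_trans (ler_wpM2l L_ge0 (lerD dw dz)) _.
have : 0 <= pi^-1 * eps by apply: mulr_ge0; rewrite ?invr_ge0 ltW.
lra.
Qed.
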